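(* Let $p$ be an odd prime and $\chi\ne1$ a Dirichlet character with odd conductor $f_\chi$ such that $p^2\nmid f_\chi$. Write $$\ell_{p,E}(s,\chi)=a_0-a_1(s-1)+a_2(s-1)^2-\cdots .$$ Then $|a_0|_p\le1$ and $p\mid a_n$ (i.e. $|a_n|_p\le|p|_p$) for all $n\geq1$.
   Context: Set $\chi(a)=0$ if $\gcd(a,f_\chi)>1$. Let $\omega$ be the Teichmüller character mod $p$ and $\langle a\rangle=\omega^{-1}(a)a$ for $a\in\mathbb Z_p^\times$. The $p$-adic Euler $\ell$-function is the $p$-adic analytic function $\ell_{p,E}(s,\chi)=\lim_{N\to\infty}\sum_{a=1,\,p\nmid a}^{f_\chi p^N}(-1)^a\chi(a)\langle a\rangle^{1-s}$, whose expansion about $s=1$ is as displayed, with coefficients $a_n\in\mathbb Q_p(\chi)$. *)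

From HB Require Import structures.
From mathcomp Require Import all_boot all_order all_algebra.
From mathcomp Require Import boolp classical_sets reals.
Set Implicit Arguments. Unset Strict Implicit. Unset Printing Implicit Defensive.
Import Order.TTheory GRing.Theory Num.Theory.
Local Open Scope ring_scope.

Section PadicDefs.
Variables (R : realType) (K : fieldType) (nrm : K -> R).

Definition cvgK (u : nat -> K) (l : K) : Prop :=
  forall e : R, 0 < e -> exists N : nat, forall n : nat, (N <= n)%N -> nrm (u n - l) < e.

Definition cauchyK (u : nat -> K) : Prop :=
  forall e : R, 0 < e -> exists N : nat, forall m n : nat,
    (N <= m)%N -> (N <= n)%N -> nrm (u m - u n) < e.

(* (K, nrm) is a complete non-archimedean valued field whose absolute value
   restricts to |.|_p on Q, normalized by |p|_p = 1/p.  Such a K contains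
   (a copy of) Q_p(chi) for the values of chi, with the same absolute value. *)
Definition padic_abs (p : nat) : Prop :=
  [/\ nrm 0 = 0 /\ (forall x, x != 0 -> 0 < nrm x),
      forall x y, nrm (x * y) = nrm x * nrm y,
      forall x y, nrm (x + y) <= Num.max (nrm x) (nrm y),
      nrm (p%:R) = (p%:R)^-1
    & forall u, cauchyK u -> exists l, cvgK u l].

(* limit of a sequence (default 0 if it does not converge) *)
Definition limK (u : nat -> K) : K := xget 0 [set l | cvgK u l].

Definition in_Zp (s : K) : Prop := exists u : nat -> int, cvgK (fun n => (u n)%:~R) s.

Definition logK (u : K) : K :=
  limK (fun n => \sum_(1 <= k < n.+1) (-1) ^+ k.+1 * (u - 1) ^+ k / k%:R).

Definition expK (z : K) : K :=
  limK (fun n => \sum_(k < n) z ^+ k / (k`!)%:R).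

(* u^x := exp(x log u), for u a principal unit *)
Definition cpowK (u x : K) : K := expK (x * logK u).

End PadicDefs.

Definition dirichlet_char (K : fieldType) (f : nat) (chi : nat -> K) : Prop :=
  [/\ (0 < f)%N, chi 1%N = 1,
      forall a b : nat, chi (a * b)%N = chi a * chi b,
      forall a : nat, chi (a + f)%N = chi a
    & forall a : nat, (chi a == 0) = ~~ coprime a f].

(* f is the conductor: chi is not induced from any proper modulus d | f *)
Definition primitive_char (K : fieldType) (f : nat) (chi : nat -> K) : Prop :=
  forall d : nat, (d %| f)%N -> (d < f)%N ->
    exists a b : nat, [/\ coprime a f, coprime b f, (a = b %[mod d])%N & chi a != chi b].

Definition nontrivial_char (K : fieldType) (f : nat) (chi : nat -> K) : Prop :=
  exists a : nat, coprime a f /\ chi a != 1.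

Definition teichmuller (R : realType) (K : fieldType) (nrm : K -> R)
    (p : nat) (omega : nat -> K) : Prop :=
  forall a : nat, ~~ (p %| a)%N -> omega a ^+ p.-1 = 1 /\ nrm (omega a - a%:R) < 1.

Definition angle (K : fieldType) (omega : nat -> K) (a : nat) : K :=
  (omega a)^-1 * a%:R.

(* N-th partial sum defining l_{p,E}(s,chi) *)
Definition ellE_partial (R : realType) (K : fieldType) (nrm : K -> R)
    (p f : nat) (chi omega : nat -> K) (s : K) (N : nat) : K :=
  \sum_(1 <= a < (f * p ^ N).+1 | ~~ (p %| a)%N)
     (-1) ^+ a * chi a * cpowK nrm (angle omega a) (1 - s).

From HB Require Import structures.
From mathcomp Require Import all_boot all_order all_algebra.
From mathcomp Require Import boolp classical_sets reals.
From mathcomp Require Import cyclic zify ring lra.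
Set Implicit Arguments. Unset Strict Implicit. Unset Printing Implicit Defensive.
Import Order.TTheory GRing.Theory Num.Theory.

(* Each partial sum of l_{p,E}(s,chi) is a finite combination of the
   exponentials exp((1 - s) log<b>), hence a power series in 1 - s whose k-th
   coefficient is a combination of (log<b>)^k / k! with coefficients of
   absolute value at most 1.  As |log<b>|_p <= |p|_p and v_p(k!) <= k/2 for
   odd p, that coefficient has absolute value at most |p|_p^(k - v_p(k!)),
   which is <= 1, and <= |p|_p when k >= 1.  Evaluating at s = 1 - p^m for
   all m identifies a_k with the limit of these coefficients, so the bounds
   pass to a_k. *)

Lemma logn_fact_rec p k : prime p -> logn p k`! = k %/ p + logn p (k %/ p)`!.
Proof.
move=> p_pr; have p_gt0 := prime_gt0 p_pr.
elim: k => [|k IHk]; first by rewrite div0n.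
rewrite factS lognM ?fact_gt0 // IHk divnS //.
have [p_dvd|p_ndvd] := boolP (p %| k.+1); last first.
  by rewrite /= logn_coprime ?prime_coprime.
have [c def_k] := dvdnP p_dvd.
have def_c : c = (k %/ p).+1 by have := divnS k p_gt0; rewrite p_dvd def_k mulnK.
have c_gt0 : (0 < c)%N by rewrite def_c.
rewrite def_k lognM // (logn_prime p p_pr) eqxx add1n factS lognM ?fact_gt0 // -def_c.
by rewrite /=; lia.
Qed.

Lemma logn_fact_le p k : prime p -> (p.-1 * logn p k`! <= k)%N.
Proof.
move=> p_pr; have p_gt1 := prime_gt1 p_pr.
elim/ltn_ind: k => -[|k] IHk; first by rewrite fact0 logn1 muln0.
rewrite logn_fact_rec // mulnDr.
have := IHk _ (ltn_Pdiv p_gt1 (ltn0Sn k)).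
have := leq_divM k.+1 p.
have : p = p.-1.+1 by rewrite prednK // ltnW.
move: (p.-1) (logn p (k.+1 %/ p)`!) => p' v ->; nia.
Qed.

Lemma logn_fact_le_half p k : prime p -> odd p -> (2 * logn p k`! <= k)%N.
Proof.
move=> p_pr p_odd; apply: leq_trans (logn_fact_le k p_pr); apply: leq_mul => //.
by have := prime_gt1 p_pr; case: p p_pr p_odd => [|[|[|n]]].
Qed.

Local Open Scope ring_scope.

Section PadicAbsolute.
Variables (R : realType) (K : fieldType) (nrm : K -> R) (p : nat).
Hypotheses (p_prime : prime p) (nrm_padic : padic_abs nrm p).

Lemma nrm0 : nrm 0 = 0. Proof. by case: nrm_padic => -[-> _]. Qed.
Lemma nrm_gt0 x : x != 0 -> 0 < nrm x.
Proof. by case: nrm_padic => -[_ nrm_gt0] *; apply: nrm_gt0. Qed.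
Lemma nrmM x y : nrm (x * y) = nrm x * nrm y. Proof. by case: nrm_padic. Qed.
Lemma nrmD_le_max x y : nrm (x + y) <= Num.max (nrm x) (nrm y).
Proof. by case: nrm_padic. Qed.
Lemma nrm_natp : nrm (p%:R) = (p%:R)^-1. Proof. by case: nrm_padic. Qed.
Lemma cauchyK_cvg u : cauchyK nrm u -> exists l, cvgK nrm u l.
Proof. by case: nrm_padic => _ _ _ _; apply. Qed.

Lemma nrm_ge0 x : 0 <= nrm x.
Proof. by have [->|/nrm_gt0/ltW//] := eqVneq x 0; rewrite nrm0. Qed.

Lemma nrm1 : nrm 1 = 1.
Proof.
have nrm1_gt0 : 0 < nrm 1 by apply: nrm_gt0; exact: oner_neq0.
by apply: (mulfI (lt0r_neq0 nrm1_gt0)); rewrite -nrmM !mulr1.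
Qed.

Lemma nrmX x n : nrm (x ^+ n) = nrm x ^+ n.
Proof. by elim: n => [|n IHn]; rewrite ?expr0 ?nrm1 // !exprS nrmM IHn. Qed.

Lemma nrmN1 : nrm (-1) = 1.
Proof.
apply/eqP; rewrite -(pexpr_eq1 (n := 2)) ?nrm_ge0 //.
by rewrite -nrmX sqrrN expr1n nrm1.
Qed.

Lemma nrmN x : nrm (- x) = nrm x.
Proof. by rewrite -mulN1r nrmM nrmN1 mul1r. Qed.

Lemma nrm_distC x y : nrm (x - y) = nrm (y - x).
Proof. by rewrite -nrmN opprB. Qed.

Lemma nrmV x : nrm x^-1 = (nrm x)^-1.
Proof.
have [->|x_neq0] := eqVneq x 0; first by rewrite invr0 nrm0 invr0.
have nrmx_neq0 : nrm x != 0 by rewrite lt0r_neq0 // nrm_gt0.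
by apply: (mulfI nrmx_neq0); rewrite -nrmM !mulfV // nrm1.
Qed.

Lemma nrmD_le x y c : nrm x <= c -> nrm y <= c -> nrm (x + y) <= c.
Proof. by move=> hx hy; apply: le_trans (nrmD_le_max x y) _; rewrite ge_max hx hy. Qed.

Lemma nrmD_lt x y c : nrm x < c -> nrm y < c -> nrm (x + y) < c.
Proof. by move=> hx hy; apply: le_lt_trans (nrmD_le_max x y) _; rewrite gt_max hx hy. Qed.

Lemma nrmB_le x y c : nrm x <= c -> nrm y <= c -> nrm (x - y) <= c.
Proof. by move=> hx hy; apply: nrmD_le; rewrite ?nrmN. Qed.

Lemma nrmB_lt x y c : nrm x < c -> nrm y < c -> nrm (x - y) < c.
Proof. by move=> hx hy; apply: nrmD_lt; rewrite ?nrmN. Qed.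

Lemma nrm_sum_le (I : Type) (r : seq I) (P : pred I) (F : I -> K) c :
  0 <= c -> (forall i, P i -> nrm (F i) <= c) -> nrm (\sum_(i <- r | P i) F i) <= c.
Proof.
move=> c_ge0 hF; elim/big_rec: _ => [|i x Pi hx]; first by rewrite nrm0.
by apply: nrmD_le => //; apply: hF.
Qed.

Lemma nrm_sum_lt (I : Type) (r : seq I) (P : pred I) (F : I -> K) c :
  0 < c -> (forall i, P i -> nrm (F i) < c) -> nrm (\sum_(i <- r | P i) F i) < c.
Proof.
move=> c_gt0 hF; elim/big_rec: _ => [|i x Pi hx]; first by rewrite nrm0.
by apply: nrmD_lt => //; apply: hF.
Qed.

Lemma nrmD_dominant x y : nrm y < nrm x -> nrm (x + y) = nrm x.
Proof.
move=> lt_yx; apply/eqP; rewrite eq_le nrmD_le ?lexx ?(ltW lt_yx) //=.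
have := nrmD_le_max (x + y) (- y); rewrite addrK nrmN le_max => /orP[//|le_xy].
by have := lt_le_trans lt_yx le_xy; rewrite ltxx.
Qed.

Lemma nrm_natr_le1 n : nrm (n%:R) <= 1.
Proof.
elim: n => [|n IHn]; first by rewrite nrm0.
by rewrite -addn1 natrD; apply: nrmD_le; rewrite ?nrm1.
Qed.

Definition absp := nrm (p%:R).

Lemma absp_gt0 : 0 < absp.
Proof. by rewrite /absp nrm_natp invr_gt0 ltr0n prime_gt0. Qed.

Lemma absp_lt1 : absp < 1.
Proof. by rewrite /absp nrm_natp invf_lt1 ?ltr0n ?prime_gt0 // ltr1n prime_gt1. Qed.

Lemma absp_ge0 : 0 <= absp. Proof. exact: ltW absp_gt0. Qed.
Lemma absp_le1 : absp <= 1. Proof. exact: ltW absp_lt1. Qed.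

Lemma absp_expn_le m n : (m <= n)%N -> absp ^+ n <= absp ^+ m.
Proof. by move=> le_mn; rewrite ler_wiXn2l ?absp_ge0 ?absp_le1. Qed.

Lemma absp_expn_small e : 0 < e -> exists j, absp ^+ j < e.
Proof.
move=> e_gt0; exists (Num.bound e^-1).
have einv_ge0 : 0 <= e^-1 by rewrite invr_ge0 ltW.
have lt_ej : e^-1 < (p ^ Num.bound e^-1)%:R.
  by apply: lt_trans (archi_boundP einv_ge0) _; rewrite ltr_nat ltn_expl ?prime_gt1.
have pj_gt0 : 0 < ((p ^ Num.bound e^-1)%:R : R) by apply: le_lt_trans lt_ej.
by rewrite /absp nrm_natp exprVn -natrX -[X in _ < X]invrK ltf_pV2 ?posrE ?invr_gt0.
Qed.

Lemma nrm_natr_mulp m : nrm ((m * p)%:R) <= absp.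
Proof. by rewrite natrM nrmM -[leRHS]mul1r ler_wpM2r ?nrm_ge0 ?nrm_natr_le1. Qed.

Lemma fermat_little m : coprime m p -> exists Q, (m ^ p.-1 = Q * p + 1)%N.
Proof.
move=> co_mp; have := Euler_exp_totient co_mp.
rewrite totient_prime // (modn_small (prime_gt1 p_prime)) => fermat.
by exists (m ^ p.-1 %/ p)%N; rewrite {1}(divn_eq (m ^ p.-1) p) fermat.
Qed.

Lemma nrm_natr_coprime m : coprime m p -> nrm (m%:R) = 1.
Proof.
move=> co_mp; have [Q def_mp] := fermat_little co_mp.
have pred_p_gt0 : (0 < p.-1)%N by rewrite -ltnS prednK ?prime_gt0 ?prime_gt1.
apply/eqP; rewrite -(pexpr_eq1 (n := p.-1)) ?nrm_ge0 // eq_le.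
rewrite exprn_ile1 ?nrm_ge0 ?nrm_natr_le1 //= -nrmX.
have -> : (m%:R : K) ^+ p.-1 = 1 + (Q * p)%:R by rewrite -natrX def_mp natrD addrC.
by rewrite nrmD_dominant ?nrm1 // (le_lt_trans (nrm_natr_mulp _) absp_lt1).
Qed.

Lemma nrm_natr n : (0 < n)%N -> nrm (n%:R) = absp ^+ logn p n.
Proof.
move=> n_gt0; have [m co_mp def_n] := pfactor_coprime p_prime n_gt0.
rewrite [in LHS]def_n natrM nrmM nrm_natr_coprime 1?coprime_sym //.
by rewrite mul1r natrX nrmX.
Qed.

Lemma nrm_expr_divn z n d : (0 < d)%N -> (logn p d <= n)%N -> nrm z <= absp ->
  nrm (z ^+ n / d%:R) <= absp ^+ (n - logn p d).
Proof.
move=> d_gt0 le_dn le_z; rewrite nrmM nrmV nrmX nrm_natr //.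
rewrite ler_pdivrMr ?exprn_gt0 ?absp_gt0 // -exprD subnK //.
by rewrite lerXn2r ?nnegrE ?nrm_ge0 ?absp_ge0.
Qed.

Lemma in_Zp_intr (z : int) : in_Zp nrm (z%:~R).
Proof. by exists (fun=> z) => e e_gt0; exists 0%N => n _; rewrite subrr nrm0. Qed.

Lemma cvgK_ext u v l : (forall n, u n = v n) -> cvgK nrm u l -> cvgK nrm v l.
Proof. by move=> eq_uv cvg_u e /cvg_u[N hN]; exists N => n /hN; rewrite eq_uv. Qed.

Lemma cvgK_cst c : cvgK nrm (fun=> c) c.
Proof. by move=> e e_gt0; exists 0%N => n _; rewrite subrr nrm0. Qed.

Lemma cvgKD u v l1 l2 : cvgK nrm u l1 -> cvgK nrm v l2 ->
  cvgK nrm (fun n => u n + v n) (l1 + l2).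
Proof.
move=> cvg_u cvg_v e e_gt0.
have [[N1 hN1] [N2 hN2]] := (cvg_u e e_gt0, cvg_v e e_gt0).
exists (maxn N1 N2) => n; rewrite geq_max => /andP[n1 n2].
by rewrite opprD addrACA; apply: nrmD_lt; [apply: hN1|apply: hN2].
Qed.

Lemma cvgKN u l : cvgK nrm u l -> cvgK nrm (fun n => - u n) (- l).
Proof. by move=> cvg_u e /cvg_u[N hN]; exists N => n /hN; rewrite -opprD nrmN. Qed.

Lemma cvgKB u v l1 l2 : cvgK nrm u l1 -> cvgK nrm v l2 ->
  cvgK nrm (fun n => u n - v n) (l1 - l2).
Proof. by move=> cvg_u /cvgKN; apply: cvgKD. Qed.

Lemma cvgKMl w u l : cvgK nrm u l -> cvgK nrm (fun n => w * u n) (w * l).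
Proof.
move=> cvg_u e e_gt0.
have w1_gt0 : 0 < nrm w + 1 by rewrite ltr_wpDl ?nrm_ge0.
have [N hN] := cvg_u (e / (nrm w + 1)) (divr_gt0 e_gt0 w1_gt0); exists N => n le_Nn.
rewrite -mulrBr nrmM; apply: (le_lt_trans (y := (nrm w + 1) * nrm (u n - l))).
  by rewrite ler_wpM2r ?nrm_ge0 // lerDl.
by rewrite -ltr_pdivlMl // mulrC hN.
Qed.

Lemma cvgK_sum (I : Type) (r : seq I) (P : pred I) (u : I -> nat -> K) (l : I -> K) :
  (forall i, P i -> cvgK nrm (u i) (l i)) ->
  cvgK nrm (fun n => \sum_(i <- r | P i) u i n) (\sum_(i <- r | P i) l i).
Proof.
move=> cvg_u; elim: r => [|i r IHr].
  by rewrite big_nil; apply: cvgK_ext (cvgK_cst 0) => n; rewrite big_nil.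
rewrite big_cons; case: (boolP (P i)) => Pi.
  by apply: cvgK_ext (cvgKD (cvg_u i Pi) IHr) => n; rewrite big_cons Pi.
by apply: cvgK_ext IHr => n; rewrite big_cons (negbTE Pi).
Qed.

Lemma cvgK_le u l c : cvgK nrm u l -> 0 <= c ->
  (exists N0, forall n, (N0 <= n)%N -> nrm (u n) <= c) -> nrm l <= c.
Proof.
move=> cvg_u c_ge0 [N0 hN0]; rewrite leNgt; apply/negP => lt_cl.
have := lt_cl; rewrite -subr_gt0 => /cvg_u[N hN].
set n := maxn N N0; have := nrmD_le_max (u n) (- (u n - l)).
rewrite opprB addrC subrK nrm_distC le_max => /orP[] le_l.
  by have := le_trans le_l (hN0 n (leq_maxr _ _)); rewrite leNgt lt_cl.
by have := le_lt_trans le_l (hN n (leq_maxl _ _)); lra.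
Qed.

Lemma limK_le u c : 0 <= c -> (forall n, nrm (u n) <= c) -> nrm (limK nrm u) <= c.
Proof.
move=> c_ge0 le_u; rewrite /limK; case: xgetP => [l _ cvg_u|_]; last by rewrite nrm0.
by apply: cvgK_le cvg_u c_ge0 _; exists 0%N.
Qed.

(* Terms tending to 0 suffice, as the absolute value is ultrametric. *)
Lemma series_cauchyK (tau : nat -> K) :
  (forall e, 0 < e -> exists N, forall k, (N <= k)%N -> nrm (tau k) < e) ->
  cauchyK nrm (fun n => \sum_(k < n) tau k).
Proof.
move=> tau0 e e_gt0; have [N hN] := tau0 e e_gt0; exists N.
suff le_case m n : (N <= m)%N -> (m <= n)%N ->
    nrm (\sum_(k < m) tau k - \sum_(k < n) tau k) < e.
  move=> m n hm hn; case: (leqP m n) => [|/ltnW] le_mn; first exact: le_case.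
  by rewrite nrm_distC le_case.
move=> le_Nm le_mn; rewrite nrm_distC -!(big_mkord xpredT).
rewrite (big_cat_nat (leq0n m) le_mn) /= addrAC subrr add0r big_nat_cond.
by apply: nrm_sum_lt => // i /andP[/andP[le_mi _] _]; apply/hN/(leq_trans le_Nm).
Qed.

Lemma series_terms_bounded (u : nat -> K) L :
  cvgK nrm (fun n => \sum_(k < n) u k) L -> exists M, 1 <= M /\ forall k, nrm (u k) <= M.
Proof.
move=> /(_ 1 ltr01)[N hN].
have [M [M_ge1 le_uM]] : exists M, 1 <= M /\ forall k, (k < N)%N -> nrm (u k) <= M.
  elim: N {hN} => [|N [M [M_ge1 le_uM]]]; first by exists 1.
  exists (Num.max M (nrm (u N))); rewrite le_max M_ge1; split=> // k.
  by rewrite ltnS leq_eqVlt => /orP[/eqP->|/le_uM le_ukM]; rewrite le_max ?lexx ?orbT ?le_ukM.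
exists M; split=> // k; case: (ltnP k N) => [/le_uM//|le_Nk].
apply/ltW/(lt_le_trans _ M_ge1).
have -> : u k = (\sum_(j < k.+1) u j - L) - (\sum_(j < k) u j - L).
  by rewrite big_ord_recr /=; ring.
by apply: nrmB_lt; apply: hN => //; apply: leqW.
Qed.

Lemma nrm_logK u : nrm (u - 1) <= absp -> nrm (logK nrm u) <= absp.
Proof.
move=> le_u; apply: limK_le absp_ge0 _ => n; rewrite big_nat_cond.
apply: nrm_sum_le absp_ge0 _ => k /andP[/andP[k_gt0 _] _].
rewrite -mulrA nrmM nrmX nrmN1 expr1n mul1r.
have lt_log_k := ltn_logl p k_gt0.
apply: le_trans (nrm_expr_divn k_gt0 (ltnW lt_log_k) le_u) _.
by rewrite -[leRHS]expr1 absp_expn_le // subn_gt0.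
Qed.

(* Convergence on |z| <= |p| needs v_p(k!) <= k/2, which fails for p = 2. *)
Lemma expK_cvg z : odd p -> nrm z <= absp ->
  cvgK nrm (fun n => \sum_(k < n) z ^+ k / (k`!)%:R) (expK nrm z).
Proof.
move=> p_odd le_z.
have : cauchyK nrm (fun n => \sum_(k < n) z ^+ k / (k`!)%:R).
  apply: (@series_cauchyK (fun k => z ^+ k / (k`!)%:R)) => e e_gt0.
  have [j lt_je] := absp_expn_small e_gt0; exists (2 * j)%N => k le_jk.
  have half_k := logn_fact_le_half k p_prime p_odd.
  have le_fact_k : (logn p k`! <= k)%N by lia.
  apply: le_lt_trans (nrm_expr_divn (fact_gt0 k) le_fact_k le_z) _.
  by apply: le_lt_trans (absp_expn_le _) lt_je; lia.
move=> /cauchyK_cvg[l cvg_l]; rewrite /expK /limK.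
by apply: (xgetPex 0 (P := [set l | cvgK nrm _ l])); exists l.
Qed.

Lemma nrm_subXX_le x y n : nrm x <= 1 -> nrm y <= 1 ->
  nrm (x ^+ n - y ^+ n) <= nrm (x - y).
Proof.
move=> le_x le_y; elim: n => [|n IHn]; first by rewrite !expr0 subrr nrm0 nrm_ge0.
have -> : x ^+ n.+1 - y ^+ n.+1 = x * (x ^+ n - y ^+ n) + (x - y) * y ^+ n.
  by rewrite !exprS; ring.
apply: nrmD_le; rewrite nrmM.
  by apply: le_trans IHn; rewrite ler_piMl ?nrm_ge0.
by rewrite nrmX ler_piMr ?nrm_ge0 // exprn_ile1 ?nrm_ge0.
Qed.

(* For close units, x^n - y^n = (x - y) S with S = n x^(n-1) up to an error of
   size |x - y| < 1, so |S| = |n| = 1 when p does not divide n. *)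
Lemma nrm_subXX_unit x y n : nrm x = 1 -> nrm y = 1 -> nrm (x - y) < 1 ->
  coprime n p -> nrm (x ^+ n - y ^+ n) = nrm (x - y).
Proof.
move=> nrm_x nrm_y lt_xy co_np.
have n_gt0 : (0 < n)%N.
  by case: n co_np => // /eqP; rewrite gcd0n => p1; have := prime_gt1 p_prime; rewrite p1.
set S := \sum_(i < n) x ^+ (n.-1 - i) * y ^+ i.
have err_S : nrm (S - n%:R * x ^+ n.-1) < 1.
  have -> : S - n%:R * x ^+ n.-1 = \sum_(i < n) x ^+ (n.-1 - i) * (y ^+ i - x ^+ i).
    rewrite -[n in n%:R](card_ord n) mulr_natl -sumr_const /S -sumrB.
    apply: eq_bigr => i _; rewrite mulrBr -exprD subnK //.
    by rewrite -ltnS prednK.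
  apply: nrm_sum_lt => // i _; rewrite nrmM nrmX nrm_x expr1n mul1r nrm_distC.
  by apply: le_lt_trans (nrm_subXX_le _ _ _) lt_xy; rewrite ?nrm_x ?nrm_y.
have nrm_S : nrm S = 1.
  rewrite -(subrK (n%:R * x ^+ n.-1) S) addrC nrmD_dominant;
    rewrite nrmM nrmX nrm_x expr1n mulr1 nrm_natr_coprime //.
by rewrite subrXX nrmM -/S nrm_S mulr1.
Qed.

Lemma nrm_angle_sub1 omega a : teichmuller nrm p omega -> ~~ (p %| a)%N ->
  nrm (angle omega a - 1) <= absp.
Proof.
move=> teich p_ndvd_a; have [root_w close_w] := teich a p_ndvd_a.
set w := omega a in root_w close_w *.
have pred_p_gt0 : (0 < p.-1)%N by rewrite -ltnS prednK ?prime_gt0 ?prime_gt1.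
have nrm_w : nrm w = 1.
  by apply/eqP; rewrite -(pexpr_eq1 (n := p.-1)) ?nrm_ge0 // -nrmX root_w nrm1.
have w_neq0 : w != 0.
  by apply/eqP => w0; move: nrm_w; rewrite w0 nrm0 => /eqP; rewrite eq_sym oner_eq0.
have co_ap : coprime a p by rewrite coprime_sym prime_coprime.
have -> : angle omega a - 1 = w^-1 * (a%:R - w) by rewrite /angle mulrBr mulVf.
rewrite nrmM nrmV nrm_w invr1 mul1r.
rewrite -(nrm_subXX_unit (n := p.-1) (nrm_natr_coprime co_ap) nrm_w)
  ?coprimePn ?prime_gt0 //; last by rewrite nrm_distC.
have [Q def_ap] := fermat_little co_ap.
by rewrite root_w -natrX def_ap natrD addrK nrm_natr_mulp.
Qed.

Lemma nrm_dirichlet_char_le1 f chi a : dirichlet_char f chi -> nrm (chi a) <= 1.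
Proof.
case=> f_gt0 chi1 chiM chi_per chi0.
have chi_mod x : chi x = chi (x %% f)%N.
  rewrite {1}(divn_eq x f); elim: (x %/ f)%N => [|k IHk]; first by rewrite mul0n add0n.
  by rewrite mulSn -addnA addnC chi_per.
have chiX x n : chi (x ^ n)%N = chi x ^+ n.
  by elim: n => [|n IHn]; rewrite ?expn0 ?expr0 // expnS exprS chiM IHn.
case: (boolP (coprime a f)) => co_af; last first.
  by move: (chi0 a); rewrite co_af => /eqP ->; rewrite nrm0 ler01.
have chi_tot : chi a ^+ totient f = 1 by rewrite -chiX chi_mod Euler_exp_totient // -chi_mod.
have : nrm (chi a) ^+ totient f == 1 by rewrite -nrmX chi_tot nrm1.
by rewrite pexpr_eq1 ?nrm_ge0 ?totient_gt0 // => /eqP ->.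
Qed.

Lemma cvgK0_uniform_lt (c : nat -> nat -> K) k :
  (forall j, (j < k)%N -> cvgK nrm (c^~ j) 0) ->
  forall e, 0 < e -> exists N0, forall N, (N0 <= N)%N ->
    forall j, (j < k)%N -> nrm (c N j) < e.
Proof.
elim: k => [|k IHk] cvg_c e e_gt0; first by exists 0%N.
have [N1 hN1] := IHk (fun j lt_jk => cvg_c j (ltnW lt_jk)) e e_gt0.
have [N2 hN2] := cvg_c k (ltnSn k) e e_gt0.
exists (maxn N1 N2) => N; rewrite geq_max => /andP[le_N1 le_N2] j.
rewrite ltnS leq_eqVlt => /orP[/eqP->|]; last exact: hN1.
by have := hN2 N le_N2; rewrite subr0.
Qed.

(* Identity theorem for power series, uniformly in N: if the sums at points
   x_m of arbitrarily small absolute value tend to 0 as N grows, so does every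
   coefficient.  By induction on k, the k-th term equals the sum minus the
   lower terms (small by induction) minus a tail of size <= C |x_m|^(k+1). *)
Lemma series_coef_cvg0 (c : nat -> nat -> K) (C : R) (x : nat -> K) :
  0 < C -> (forall N j, nrm (c N j) <= C) ->
  (forall e, 0 < e -> exists m, [/\ 0 < nrm (x m), nrm (x m) <= 1 & nrm (x m) < e]) ->
  (forall m, exists D : nat -> K,
     (forall N, cvgK nrm (fun n => \sum_(j < n) c N j * x m ^+ j) (D N)) /\ cvgK nrm D 0) ->
  forall k, cvgK nrm (c^~ k) 0.
Proof.
move=> C_gt0 le_cC small_x sum_x; elim/ltn_ind => k IHk e e_gt0.
have [m [r_gt0 r_le1 lt_re]] := small_x (e / C) (divr_gt0 e_gt0 C_gt0).
set r := nrm (x m) in r_gt0 r_le1 lt_re.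
have [D [cvg_D D0]] := sum_x m.
have erk_gt0 : 0 < e * r ^+ k by rewrite mulr_gt0 ?exprn_gt0.
have [N1 hN1] := D0 _ erk_gt0.
have [N2 hN2] := cvgK0_uniform_lt IHk erk_gt0.
exists (maxn N1 N2) => N; rewrite geq_max => /andP[le_N1 le_N2]; rewrite subr0.
set T := D N - \sum_(j < k.+1) c N j * x m ^+ j.
have le_T : nrm T <= C * r ^+ k.+1.
  apply: cvgK_le (cvgKB (cvg_D N) (cvgK_cst (\sum_(j < k.+1) c N j * x m ^+ j))) _ _.
    by rewrite mulr_ge0 ?exprn_ge0 ?ltW.
  exists k.+1 => n le_kn /=; rewrite -!(big_mkord xpredT (fun j => c N j * x m ^+ j)).
  rewrite (big_cat_nat (leq0n k.+1) le_kn) /= addrAC subrr add0r big_nat_cond.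
  apply: nrm_sum_le; first by rewrite mulr_ge0 ?exprn_ge0 ?ltW.
  move=> j /andP[/andP[le_kj _] _]; rewrite nrmM nrmX.
  apply: ler_pM; [exact: nrm_ge0|exact: exprn_ge0 (nrm_ge0 _)|exact: le_cC|].
  exact: (ler_wiXn2l (ltW r_gt0) r_le1 le_kj).
have def_ck : c N k * x m ^+ k = (D N - \sum_(j < k) c N j * x m ^+ j) - T.
  by rewrite /T big_ord_recr /=; ring.
suff : nrm (c N k * x m ^+ k) < e * r ^+ k by rewrite nrmM nrmX ltr_pM2r ?exprn_gt0.
rewrite def_ck; apply: nrmB_lt; first apply: nrmB_lt.
- by have := hN1 N le_N1; rewrite subr0.
- apply: nrm_sum_lt => // j _; rewrite nrmM nrmX.
  apply: le_lt_trans (hN2 N le_N2 j (ltn_ord j)).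
  by rewrite ler_piMr ?nrm_ge0 ?exprn_ile1 ?nrm_ge0.
- apply: le_lt_trans le_T _; rewrite exprS mulrA ltr_pM2r ?exprn_gt0 //.
  by rewrite -ltr_pdivlMl // mulrC.
Qed.

Section EulerLFunction.
Variables (f : nat) (chi omega : nat -> K).
Hypotheses (p_odd : odd p) (teich : teichmuller nrm p omega).
Hypothesis (dchar : dirichlet_char f chi).

(* The coefficient of (1 - s)^k in the N-th partial sum of l_{p,E}(s,chi). *)
Definition ellE_coef (N k : nat) : K :=
  \sum_(1 <= b < (f * p ^ N).+1 | ~~ (p %| b)%N)
     (-1) ^+ b * chi b * (logK nrm (angle omega b) ^+ k / (k`!)%:R).

Let nrm_log_angle b : ~~ (p %| b)%N -> nrm (logK nrm (angle omega b)) <= absp.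
Proof. by move=> p_ndvd_b; apply: nrm_logK => //; apply: nrm_angle_sub1. Qed.

Let nrm_sign_chi b : nrm ((-1) ^+ b * chi b) <= 1.
Proof. by rewrite nrmM nrmX nrmN1 expr1n mul1r (nrm_dirichlet_char_le1 _ dchar). Qed.

Lemma nrm_ellE_coef N k : nrm (ellE_coef N k) <= absp ^+ (k - logn p k`!).
Proof.
apply: nrm_sum_le; first by rewrite exprn_ge0 ?absp_ge0.
move=> b p_ndvd_b; rewrite nrmM -[leRHS]mul1r ler_pM ?nrm_ge0 ?nrm_sign_chi //.
apply: nrm_expr_divn; rewrite ?fact_gt0 ?nrm_log_angle //.
by have := logn_fact_le_half k p_prime p_odd; lia.
Qed.

Lemma nrm_ellE_coef_le1 N k : nrm (ellE_coef N k) <= 1.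
Proof.
by apply: le_trans (nrm_ellE_coef N k) _; rewrite exprn_ile1 ?absp_ge0 ?absp_le1.
Qed.

Lemma nrm_ellE_coef_le_absp N k : (0 < k)%N -> nrm (ellE_coef N k) <= absp.
Proof.
move=> k_gt0; apply: le_trans (nrm_ellE_coef N k) _.
rewrite -[leRHS]expr1 absp_expn_le //.
by have := logn_fact_le_half k p_prime p_odd; lia.
Qed.

Lemma ellE_partial_series s N : nrm (1 - s) <= 1 ->
  cvgK nrm (fun n => \sum_(k < n) ellE_coef N k * (1 - s) ^+ k)
    (ellE_partial nrm p f chi omega s N).
Proof.
move=> le_s; rewrite /ellE_partial /cpowK.
apply: cvgK_ext (cvgK_sum _ _) => [n|b p_ndvd_b]; last first.
  apply/cvgKMl/expK_cvg => //; rewrite nrmM -[absp]mul1r.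
  by rewrite ler_pM ?nrm_ge0 ?nrm_log_angle.
rewrite /ellE_coef; under [RHS]eq_bigr do rewrite mulr_suml.
rewrite exchange_big /=; apply: eq_bigr => b _; rewrite mulr_sumr.
by apply: eq_bigr => k _; rewrite exprMn; ring.
Qed.

Section Coefficients.
Variable a : nat -> K.
Hypothesis ellE_expansion : forall s : K, in_Zp nrm s ->
  exists L : K,
    cvgK nrm (fun N => ellE_partial nrm p f chi omega s N) L /\
    cvgK nrm (fun n => \sum_(k < n) a k * (1 - s) ^+ k) L.

Let a_bounded : exists M, 1 <= M /\ forall k, nrm (a k) <= M.
Proof.
have [L [_ cvg_a]] := ellE_expansion (in_Zp_intr 0).
apply: series_terms_bounded; apply: cvgK_ext cvg_a => n.
by apply: eq_bigr => k _; rewrite mulr0z subr0 expr1n mulr1.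
Qed.

(* Evaluate at s = 1 - p^m: the series of (a k - ellE_coef N k) p^(mk) sums to
   l_{p,E}(s,chi) minus its N-th partial sum. *)
Lemma ellE_coef_cvg k : cvgK nrm (fun N => ellE_coef N k) (a k).
Proof.
have [M [M_ge1 le_aM]] := a_bounded.
have nrm_pX m : nrm ((p%:R : K) ^+ m) = absp ^+ m by rewrite nrmX.
have cvg0 j : cvgK nrm (fun N => a j - ellE_coef N j) 0.
  apply: (@series_coef_cvg0 (fun N j => a j - ellE_coef N j) M (fun m => p%:R ^+ m)).
  - exact: lt_le_trans ltr01 M_ge1.
  - by move=> N i; apply: nrmB_le => //; apply: le_trans (nrm_ellE_coef_le1 _ _) M_ge1.
  - move=> e e_gt0; have [m lt_me] := absp_expn_small e_gt0; exists m.
    by rewrite nrm_pX exprn_gt0 ?exprn_ile1 ?absp_gt0 ?absp_ge0 ?absp_le1.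
  move=> m; have s_Zp : in_Zp nrm (1 - (p ^ m)%:R).
    by have := in_Zp_intr (1 - (p ^ m)%:Z); rewrite intrB.
  have [L [cvg_part cvg_a]] := ellE_expansion s_Zp; rewrite opprB addrC subrK in cvg_a.
  exists (fun N => L - ellE_partial nrm p f chi omega (1 - (p ^ m)%:R) N); split.
    move=> N; have := @ellE_partial_series (1 - (p ^ m)%:R) N.
    rewrite opprB addrC subrK nrm_natr_le1 => /(_ isT) /(cvgKB cvg_a).
    apply: cvgK_ext => n; rewrite natrX -sumrB.
    by apply: eq_bigr => i _; rewrite mulrBl.
  by move=> e /cvg_part[N hN]; exists N => n /hN; rewrite subr0 nrm_distC.
by move=> e /(cvg0 k)[N hN]; exists N => n /hN; rewrite subr0 nrm_distC.
Qed.

End Coefficients.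
End EulerLFunction.
End PadicAbsolute.

Theorem corollary3p7 (R : realType) (K : fieldType) (nrm : K -> R)
    (p f : nat) (chi omega : nat -> K) (a : nat -> K) :
  prime p -> odd p ->
  padic_abs nrm p ->
  teichmuller nrm p omega ->
  dirichlet_char f chi -> primitive_char f chi -> nontrivial_char f chi ->
  odd f -> ~~ (p ^ 2 %| f)%N ->
  (* l_{p,E}(s,chi) = a_0 - a_1 (s-1) + a_2 (s-1)^2 - ... for s in Z_p *)
  (forall s : K, in_Zp nrm s ->
     exists L : K,
       cvgK nrm (fun N => ellE_partial nrm p f chi omega s N) L /\
       cvgK nrm (fun n => \sum_(k < n) a k * (1 - s) ^+ k) L) ->
  nrm (a 0%N) <= 1 /\ (forall n : nat, (1 <= n)%N -> nrm (a n) <= nrm (p%:R : K)).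
Proof.
move=> p_prime p_odd nrm_padic teich dchar _ _ _ _ expansion.
have cvg_coef := ellE_coef_cvg p_prime nrm_padic p_odd teich dchar expansion.
split=> [|n n_gt0].
  apply: (cvgK_le nrm_padic (cvg_coef 0%N)) => //; exists 0%N => N _.
  exact: nrm_ellE_coef_le1.
apply: (cvgK_le nrm_padic (cvg_coef n)); first exact: absp_ge0.
by exists 0%N => N _; apply: nrm_ellE_coef_le_absp.
Qed.
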